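(* Let $\lambda$ be a partition with $\ell\geq 4$ positive parts, and let $n\geq\ell$. If $\lambda=(3^m,2,1^{\ell-m-1})$ for some $m\in\{1,\ldots,\ell-2\}$, then the poset $\mathcal B_\lambda^n$ is not a lattice.
   Context: Superscripts denote repeated parts, e.g. $(3^2,2,1)=(3,3,2,1)$. For $N\geq 1$ and a partition $\nu$ with at most $N$ positive parts, $\mathcal B_\nu^N$ is the set of semistandard Young tableaux of shape $\nu$ (rows weakly increasing, columns strictly increasing) with entries in $\{1,\ldots,N+1\}$, partially ordered by the reflexive transitive closure of $T<F_i(T)$ for $i\in\{1,\ldots,N\}$ with $F_i(T)\neq 0$. Here $F_i$ is the type A crystal lowering operator: in the reading word of $T$ (rows read from bottom to top, each row left to right) keep only letters $i$ and $i+1$, replace each $i$ by '')'' and each $i+1$ by ''('', and match parentheses in the usual way; if there is no unmatched '')'', $F_i(T)=0$; otherwise $F_i(T)$ is obtained by changing the entry $i$ corresponding to the rightmost unmatched '')'' into $i+1$. *)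

From Stdlib Require Import Relations.
From mathcomp Require Import all_boot.
Set Implicit Arguments. Unset Strict Implicit. Unset Printing Implicit Defensive.

(* A tableau is a list of rows (top row first), each row a list of entries. *)
Definition tableau := seq (seq nat).

Definition is_partition (nu : seq nat) : bool :=
  sorted geq nu && all (fun x => 0 < x) nu.

(* semistandard Young tableau of shape nu, entries in {1,...,N+1} *)
Definition is_ssyt (N : nat) (nu : seq nat) (T : tableau) : bool :=
  [&& map size T == nu,
      all (fun r => sorted leq r) T,
      all (fun r => all (fun x => (1 <= x) && (x <= N.+1)) r) T &
      all (fun k => all (fun j => nth 0 (nth [::] T k) j < nth 0 (nth [::] T k.+1) j)
                        (iota 0 (size (nth [::] T k.+1))))
          (iota 0 (size T).-1)].

Definition B (N : nat) (nu : seq nat) : pred tableau := fun T => is_ssyt N nu T.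

Definition reading_word (T : tableau) : seq nat := flatten (rev T).

(* position (in the word) of the rightmost unmatched ")" = letter i, where
   i+1 is "(" and i is ")"; [op] counts currently unmatched "(" . *)
Fixpoint rum_pos (i : nat) (w : seq nat) (k op : nat) (acc : option nat)
  : option nat :=
  match w with
  | [::] => acc
  | x :: w' =>
      if x == i then
        (if 0 < op then rum_pos i w' k.+1 op.-1 acc
         else rum_pos i w' k.+1 op (Some k))
      else if x == i.+1 then rum_pos i w' k.+1 op.+1 acc
      else rum_pos i w' k.+1 op acc
  end.

(* crystal lowering operator F_i; None stands for 0 *)
Definition F (i : nat) (T : tableau) : option tableau :=
  let w := reading_word T in
  match rum_pos i w 0 0 None with
  | None => None
  | Some p => Some (rev (reshape (map size (rev T)) (set_nth 0 w p i.+1)))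
  end.

Definition step (N : nat) : relation tableau :=
  fun T U => exists i, 1 <= i <= N /\ F i T = Some U.

Definition le_B (N : nat) : relation tableau := clos_refl_trans tableau (step N).

Definition is_lattice (P : pred tableau) (le : relation tableau) : Prop :=
  forall T U, P T -> P U ->
    (exists J, [/\ P J, le T J, le U J &
                   forall V, P V -> le T V -> le U V -> le J V]) /\
    (exists M, [/\ P M, le M T, le M U &
                   forall V, P V -> le V T -> le V U -> le V M]).

(* The counts [cnt_gt k T] of entries of T exceeding k grade the crystal:
   F_i raises the i-th count by one and fixes the others.  Hence comparable
   tableaux with equal counts coincide, every F_i-step is a cover, and
   T <= U is an F_i-step as soon as the counts of U exceed those of T by one
   in the single coordinate i.
   With this, two explicit tableaux T, U in B^4 of shape (3,2,1,1) (resp.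
   (3,3,2,1)) have two upper bounds V1, V2 with nothing between {T, U} and
   {V1, V2}, so T and U have no join.  A general shape (3^s, core, 1^b) is
   reduced to the core by filling the first s rows with 1, ..., s and the last
   b rows with s+6, ..., s+b+5: the operators F_(s+1), ..., F_(s+4) do not
   see these letters and act on the core shifted by s. *)

From Stdlib Require Import Relations.
From mathcomp Require Import all_boot zify.
Set Implicit Arguments. Unset Strict Implicit. Unset Printing Implicit Defensive.

Lemma set_nth_cat_ltn T (x0 : T) u v p y : p < size u ->
  set_nth x0 (u ++ v) p y = set_nth x0 u p y ++ v.
Proof. by elim: u p => [|x u IH] [|p] //= /IH ->. Qed.

Lemma set_nth_cat_size T (x0 : T) u v p y :
  set_nth x0 (u ++ v) (size u + p) y = u ++ set_nth x0 v p y.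
Proof. by elim: u => [|x u IH] /=; rewrite ?add0n ?addSn ?IH. Qed.

Lemma map_set_nth T S (f : T -> S) x0 x1 w p y : p < size w ->
  map f (set_nth x0 w p y) = set_nth x1 (map f w) p (f y).
Proof. by elim: w p => [|x w IH] [|p] //= /IH ->. Qed.

Lemma reshape_cat T sh1 sh2 (s1 s2 : seq T) : sumn sh1 = size s1 ->
  reshape (sh1 ++ sh2) (s1 ++ s2) = reshape sh1 s1 ++ reshape sh2 s2.
Proof.
elim: sh1 s1 => [|k sh IH] s1 /=; first by case: s1.
move=> sz_s1; have le_k : k <= size s1 by rewrite -sz_s1 leq_addr.
rewrite takel_cat // drop_cat; case: ltnP => [_|ge_k].
  by rewrite IH // size_drop -sz_s1 addKn.
have eq_k : k = size s1 by apply/eqP; rewrite eqn_leq le_k.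
rewrite eq_k subnn drop0 drop_size take_size.
by rewrite -[s2]cat0s IH //=; lia.
Qed.

(** * The operators F_i on words and tableaux *)

Definition inert (i : nat) (w : seq nat) : bool :=
  all (fun x => (x != i) && (x != i.+1)) w.

Lemma rum_posP i w k op acc p :
  rum_pos i w k op acc = Some p ->
  acc = Some p \/ k <= p < k + size w /\ nth 0 w (p - k) = i.
Proof.
elim: w k op acc => [|x w IH] k op acc /=; first by left.
have IHS op' acc' : rum_pos i w k.+1 op' acc' = Some p ->
    acc' = Some p \/ k <= p < k + (size w).+1 /\ nth 0 (x :: w) (p - k) = i.
  case/IH=> [|[/andP[lt_kp lt_p] w_p]]; first by left.
  by right; rewrite -(subnSK lt_kp) addnS ltnW.
case: ifP => [/eqP eq_xi|_]; last by case: ifP => _ /IHS.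
case: ifP => _ /IHS // [[<-]|]; right => //.
by rewrite subnn eq_xi leqnn addnS ltnS leq_addr.
Qed.

Lemma rum_pos_inert i w k op acc : inert i w -> rum_pos i w k op acc = acc.
Proof.
elim: w k op => [|x w IH] k op //=.
by case/andP => /andP [/negbTE -> /negbTE ->] /IH ->.
Qed.

Lemma rum_pos_cat_inertl i u w k op acc : inert i u ->
  rum_pos i (u ++ w) k op acc = rum_pos i w (k + size u) op acc.
Proof.
elim: u k => [|x u IH] k /=; first by rewrite addn0.
by case/andP => /andP [/negbTE -> /negbTE ->] /IH ->; rewrite addnS.
Qed.

Lemma rum_pos_cat_inertr i w v k op acc : inert i v ->
  rum_pos i (w ++ v) k op acc = rum_pos i w k op acc.
Proof.
move=> v_inert; elim: w k op acc => [|x w IH] k op acc /=.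
  exact: rum_pos_inert.
by rewrite !IH.
Qed.

Lemma rum_pos_offset i w d k op acc :
  rum_pos i w (d + k) op (omap (addn d) acc) = omap (addn d) (rum_pos i w k op acc).
Proof.
elim: w k op acc => [|x w IH] k op acc //=.
rewrite -addnS; case: ifP => _; [case: ifP => _|case: ifP => _]; rewrite ?IH //.
by rewrite -(IH _ _ (Some k)).
Qed.

Lemma rum_pos_shift i s w k op acc :
  rum_pos (s + i) (map (addn s) w) k op acc = rum_pos i w k op acc.
Proof.
elim: w k op acc => [|x w IH] k op acc //=.
by rewrite eqn_add2l -addnS eqn_add2l !IH.
Qed.

Definition fword (i : nat) (w : seq nat) : option (seq nat) :=
  omap (fun p => set_nth 0 w p i.+1) (rum_pos i w 0 0 None).

Lemma fwordP i w w' : fword i w = Some w' ->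
  exists p, [/\ p < size w, nth 0 w p = i & w' = set_nth 0 w p i.+1].
Proof.
rewrite /fword; case E: rum_pos => [p|] //= [<-].
by case: (rum_posP E) => [//|[/andP[_ lt_p]]]; rewrite subn0 => w_p; exists p.
Qed.

Lemma size_fword i w w' : fword i w = Some w' -> size w' = size w.
Proof. by case/fwordP=> p [lt_p _ ->]; rewrite size_set_nth; apply/maxn_idPr. Qed.

Lemma count_gt_fword i k w w' : fword i w = Some w' ->
  count (fun x => k < x) w' = count (fun x => k < x) w + (k == i).
Proof.
case/fwordP=> p [lt_p wp ->]; rewrite count_set_nth_ltn // wp.
case: (ltngtP k i) => [lt_ki|lt_ik|->].
- by rewrite ltnS (ltnW lt_ki) addnK addn0.
- by rewrite ltnNge lt_ik subn0.
- by rewrite ltnSn subn0.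
Qed.

Lemma fword_cat_inert i u w v : inert i u -> inert i v ->
  fword i (u ++ w ++ v) = omap (fun w' => u ++ w' ++ v) (fword i w).
Proof.
move=> u_inert v_inert.
rewrite /fword rum_pos_cat_inertl // rum_pos_cat_inertr // add0n.
have := rum_pos_offset i w (size u) 0 0 None; rewrite addn0 /= => ->.
case E: rum_pos => [p|] //=; case: (rum_posP E) => [//|[/andP[_ lt_pw] _]].
by rewrite set_nth_cat_size set_nth_cat_ltn.
Qed.

Lemma fword_shift i s w :
  fword (s + i) (map (addn s) w) = omap (map (addn s)) (fword i w).
Proof.
rewrite /fword rum_pos_shift; case E: rum_pos => [p|] //=.
case: (rum_posP E) => [//|[/andP[_ lt_pw] _]].
by rewrite (map_set_nth _ _ 0) // addnS.
Qed.

Definition refill (T : tableau) (w : seq nat) : tableau :=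
  rev (reshape (map size (rev T)) w).

Definition shift_tab (s : nat) (T : tableau) : tableau := map (map (addn s)) T.

Lemma F_refill i T : F i T = omap (refill T) (fword i (reading_word T)).
Proof. by rewrite /F /fword; case: rum_pos. Qed.

Lemma size_reading_word T : size (reading_word T) = sumn (map size (rev T)).
Proof. exact: size_flatten. Qed.

Lemma reading_word_refill T w : size w = size (reading_word T) ->
  reading_word (refill T w) = w.
Proof.
by move=> sz_w; rewrite /reading_word /refill revK reshapeKr // sz_w size_reading_word.
Qed.

Lemma reading_word_cat A C : reading_word (A ++ C) = reading_word C ++ reading_word A.
Proof. by rewrite /reading_word rev_cat flatten_cat. Qed.

Lemma reading_word_shift s T :
  reading_word (shift_tab s T) = map (addn s) (reading_word T).
Proof. by rewrite /reading_word /shift_tab map_flatten map_rev. Qed.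

Lemma all_reading_word P T : all P (reading_word T) = all (all P) T.
Proof.
rewrite /reading_word; elim: T => //= r T IH.
by rewrite rev_cons flatten_rcons all_cat IH andbC.
Qed.

Lemma refill_cat A W C w : size w = size (reading_word W) ->
  refill (A ++ W ++ C) (reading_word C ++ w ++ reading_word A) = A ++ refill W w ++ C.
Proof.
move=> sz_w; rewrite /refill !rev_cat -catA !map_cat.
rewrite reshape_cat -?size_reading_word // reshape_cat -?size_reading_word //.
by rewrite !flattenK !rev_cat !revK catA.
Qed.

Lemma F_cat_inert i A W C :
  inert i (reading_word A) -> inert i (reading_word C) ->
  F i (A ++ W ++ C) = omap (fun W' => A ++ W' ++ C) (F i W).
Proof.
move=> A_inert C_inert; rewrite !F_refill !reading_word_cat -catA fword_cat_inert //.
by case E: fword => [w|] //=; rewrite refill_cat // (size_fword E).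
Qed.

Lemma F_shift i s T : F (s + i) (shift_tab s T) = omap (shift_tab s) (F i T).
Proof.
rewrite !F_refill reading_word_shift fword_shift; case: fword => [w|] //=.
rewrite /refill; have -> : map size (rev (shift_tab s T)) = map size (rev T).
  by rewrite /shift_tab -map_rev -map_comp; apply: eq_map => r /=; rewrite size_map.
by rewrite /shift_tab -map_reshape (map_rev (map (addn s))).
Qed.

(** * The grading of the crystal order *)

Definition cnt_gt (k : nat) (T : tableau) : nat :=
  count (fun x => k < x) (reading_word T).

Lemma F_cnt_gt i k T U : F i T = Some U -> cnt_gt k U = cnt_gt k T + (k == i).
Proof.
rewrite F_refill; case E: fword => [w|] //= [<-].
by rewrite /cnt_gt reading_word_refill ?(size_fword E) ?(count_gt_fword _ E).
Qed.

Lemma le_B_cnt_gt N T U : le_B N T U -> forall k, cnt_gt k T <= cnt_gt k U.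
Proof.
elim=> [{}T {}U [i [_ FTU]] | // | T' J U' _ le_TJ _ le_JU] k.
- by rewrite (F_cnt_gt k FTU) leq_addr.
- exact: leq_trans (le_TJ k) (le_JU k).
Qed.

Lemma le_B_first_step N T U :
  le_B N T U -> T = U \/ exists i V, F i T = Some V /\ le_B N V U.
Proof.
case/(clos_rt_rt1n tableau) => [|V {}U [i [_ FTV]] le_VU]; first by left.
by right; exists i, V; split; last exact: clos_rt1n_rt.
Qed.

Lemma le_B_same_cnt N T U :
  le_B N T U -> (forall k, cnt_gt k T = cnt_gt k U) -> T = U.
Proof.
case/le_B_first_step => [//|[i [V [/F_cnt_gt FTV /le_B_cnt_gt le_VU]]]] eq_TU.
by have := le_VU i; rewrite FTV eq_TU eqxx addn1 ltnn.
Qed.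

Lemma le_B_cnt_step N T U i : le_B N T U ->
  (forall k, cnt_gt k U = cnt_gt k T + (k == i)) -> F i T = Some U.
Proof.
case/le_B_first_step => [<-|[j [V [FTV le_VU]]]] cnt_U.
  by have := cnt_U i; rewrite eqxx; lia.
have cnt_V k := F_cnt_gt k FTV; have mono := le_B_cnt_gt le_VU.
have eq_ji : j = i.
  by apply/eqP; have := mono j; rewrite cnt_V cnt_U eqxx; case: eqP; lia.
rewrite -eq_ji FTV (le_B_same_cnt le_VU) // => k.
by rewrite cnt_V cnt_U eq_ji.
Qed.

Lemma le_B_cover N T J V i : le_B N T J -> le_B N J V -> F i T = Some V ->
  J = T \/ J = V.
Proof.
move=> le_TJ le_JV /F_cnt_gt cnt_V.
have lo := le_B_cnt_gt le_TJ; have hi := le_B_cnt_gt le_JV.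
have [eq_i|ne_i] := eqVneq (cnt_gt i J) (cnt_gt i T).
  left; symmetry; apply: le_B_same_cnt le_TJ _ => k.
  by have := lo k; have := hi k; rewrite cnt_V; case: eqP => [->|_]; lia.
right; apply: le_B_same_cnt le_JV _ => k.
by have := lo k; have := hi k; rewrite cnt_V; case: eqP => [->|_]; lia.
Qed.

Definition no_bound_between N (T U V1 V2 : tableau) : Prop :=
  forall J, le_B N T J -> le_B N U J -> le_B N J V1 -> le_B N J V2 -> False.

Lemma not_lattice_no_bound_between N (P : pred tableau) T U V1 V2 :
  P T -> P U -> P V1 -> P V2 ->
  le_B N T V1 -> le_B N U V1 -> le_B N T V2 -> le_B N U V2 ->
  no_bound_between N T U V1 V2 -> ~ is_lattice P (le_B N).
Proof.
move=> PT PU PV1 PV2 le_TV1 le_UV1 le_TV2 le_UV2 noJ /(_ T U PT PU).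
case=> [[J [_ le_TJ le_UJ J_least]] _].
exact: noJ J le_TJ le_UJ (J_least V1 PV1 le_TV1 le_UV1) (J_least V2 PV2 le_TV2 le_UV2).
Qed.

Lemma no_bound_between_A N T U V1 V2 X Y a1 a2 a3 :
  F a2 T = Some Y -> F a3 Y = Some V1 -> F a3 T = None ->
  F a2 U = Some V1 -> F a1 U = Some X -> F a2 X = Some V2 -> F a1 V1 <> Some V2 ->
  no_bound_between N T U V1 V2.
Proof.
move=> FTY FYV1 FT3 FUV1 FUX FXV2 FV1 J le_TJ le_UJ le_JV1 le_JV2.
have cnt_U k : cnt_gt k U = cnt_gt k T + (k == a3).
  by have := F_cnt_gt k FUV1; rewrite (F_cnt_gt k FYV1) (F_cnt_gt k FTY); lia.
have cnt_V2 k : cnt_gt k V2 = cnt_gt k V1 + (k == a1).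
  by rewrite (F_cnt_gt k FXV2) (F_cnt_gt k FUX) (F_cnt_gt k FUV1); lia.
have [eq_JU|eq_JV1] := le_B_cover le_UJ le_JV1 FUV1; subst J.
- by rewrite (le_B_cnt_step le_TJ cnt_U) in FT3.
- exact/FV1/(le_B_cnt_step le_JV2).
Qed.

Lemma no_bound_between_B N T U V1 V2 Y a1 a2 a3 : a1 != a3 ->
  F a3 T = Some Y -> F a2 Y = Some V1 -> F a2 T = None ->
  F a3 U = Some V1 -> F a1 U = Some V2 ->
  no_bound_between N T U V1 V2.
Proof.
move=> ne_a13 FTY FYV1 FT2 FUV1 FUV2 J le_TJ le_UJ le_JV1 le_JV2.
have cnt_U k : cnt_gt k U = cnt_gt k T + (k == a2).
  by have := F_cnt_gt k FUV1; rewrite (F_cnt_gt k FYV1) (F_cnt_gt k FTY); lia.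
have [eq_JU|eq_JV1] := le_B_cover le_UJ le_JV1 FUV1; subst J.
  by rewrite (le_B_cnt_step le_TJ cnt_U) in FT2.
have [eq_V1U|eq_V12] := le_B_cover le_UJ le_JV2 FUV2.
  by have := F_cnt_gt a3 FUV1; rewrite eq_V1U eqxx; lia.
by have := F_cnt_gt a1 FUV1; rewrite eq_V12 (F_cnt_gt a1 FUV2) eqxx (negbTE ne_a13); lia.
Qed.

(** * Semistandard tableaux *)

Definition col_lt (r1 r2 : seq nat) : bool :=
  all (fun j => nth 0 r1 j < nth 0 r2 j) (iota 0 (size r2)).

Lemma is_ssytE N nu T : is_ssyt N nu T =
  [&& map size T == nu, all (sorted leq) T, all (all (fun x => 0 < x <= N.+1)) T
    & sorted col_lt T].
Proof.
rewrite /is_ssyt; congr [&& _, _, _ & _].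
apply/allP/(sortedP [::]) => [col k lt_k | col k].
  by apply: col; rewrite mem_iota add0n; lia.
by rewrite mem_iota add0n => /andP[_ lt_k]; apply: col; lia.
Qed.

Lemma sub_all_all (P Q : pred nat) (T : tableau) :
  subpred P Q -> all (all P) T -> all (all Q) T.
Proof. by move=> PQ; apply: sub_all => r; apply: sub_all. Qed.

Lemma col_lt_sep t r1 r2 :
  all (fun x => x <= t) r1 -> all (fun y => t < y) r2 -> col_lt r1 r2.
Proof.
move=> /allP r1_le /allP r2_gt; apply/allP => j; rewrite mem_iota add0n => /andP[_ lt_j].
apply: leq_ltn_trans (r2_gt _ (mem_nth 0 lt_j)).
by case: (ltnP j (size r1)) => [/(mem_nth 0)/r1_le|/(nth_default 0)->].
Qed.

Lemma col_lt_shift s r1 r2 : col_lt r1 r2 -> col_lt (map (addn s) r1) (map (addn s) r2).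
Proof.
move=> /allP col; apply/allP => j; rewrite size_map => j_in.
have := col j j_in; move: j_in; rewrite mem_iota add0n => /andP[_ lt_j2].
case: (ltnP j (size r1)) => [lt_j1|ge_j1]; first by rewrite !(nth_map 0) // ltn_add2l.
rewrite (nth_default 0 (_ : size (map (addn s) r1) <= j)) ?size_map //.
by rewrite (nth_default 0 ge_j1) (nth_map 0) // => /ltn_addl.
Qed.

Lemma is_ssyt_cat N t nu1 nu2 A C :
  is_ssyt N nu1 A -> is_ssyt N nu2 C ->
  all (all (fun x => x <= t)) A -> all (all (fun x => t < x)) C ->
  is_ssyt N (nu1 ++ nu2) (A ++ C).
Proof.
rewrite !is_ssytE => /and4P[/eqP<- A_rows A_ents A_col] /and4P[/eqP<- C_rows C_ents C_col].
move=> A_le C_gt; rewrite map_cat eqxx !all_cat A_rows C_rows A_ents C_ents /=.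
case: A A_col A_le {A_rows A_ents} => [//|a A] /= A_col /andP[a_le A_le].
rewrite cat_path A_col; case: C C_col C_gt {C_rows C_ents} => [//|c C] /= -> /andP[c_gt _].
rewrite andbT; apply: col_lt_sep c_gt.
by case: (lastP A) A_le => [//|A' r]; rewrite last_rcons all_rcons => /andP[].
Qed.

Lemma is_ssyt_shift N s nu T : is_ssyt N nu T -> is_ssyt (s + N) nu (shift_tab s T).
Proof.
rewrite !is_ssytE /shift_tab -map_comp => /and4P[shape_T rows ents col].
apply/and4P; split.
- by rewrite (eq_map (fun r => size_map _ r)).
- rewrite all_map; apply: sub_all rows => r /=; rewrite sorted_map.
  by apply: sub_sorted => x y /=; rewrite leq_add2l.
- rewrite all_map; apply: sub_all ents => r /= /allP r_ents; rewrite all_map.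
  apply/allP => x /r_ents /andP[x_gt0 le_x] /=.
  by rewrite -addnS leq_add2l le_x andbT ltn_addl.
- by rewrite sorted_map; apply: sub_sorted col => r1 r2; apply: col_lt_shift.
Qed.

Lemma is_ssyt_widen N N' nu T : N <= N' -> is_ssyt N nu T -> is_ssyt N' nu T.
Proof.
move=> le_N; rewrite !is_ssytE => /and4P[-> -> ents ->]; rewrite andbT /=.
by apply: sub_all_all ents => x /andP[-> le_x]; apply: leq_trans le_x _.
Qed.

Definition block (w a h : nat) : tableau := [seq nseq w j | j <- iota a h].

Lemma block_entries w a h : all (all (fun x => a <= x < a + h)) (block w a h).
Proof.
apply/allP => r /mapP[j]; rewrite mem_iota => j_range ->.
by apply/allP => x /nseqP[-> _].
Qed.

Lemma is_ssyt_block N w a h :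
  0 < a -> a + h <= N.+2 -> is_ssyt N (nseq h w) (block w a h).
Proof.
move=> a_gt0 le_ah; rewrite is_ssytE; apply/and4P; split.
- apply/eqP; rewrite -map_comp; elim: h a {a_gt0 le_ah} => //= h IH a.
  by rewrite size_nseq IH.
- by apply/allP => r /mapP[j _ ->]; case: w => //= w; elim: w => //= w ->; rewrite leqnn.
- apply: sub_all_all (block_entries w a h) => x /andP[le_ax lt_x].
  by rewrite (leq_trans a_gt0 le_ax) -ltnS (leq_trans lt_x le_ah).
- rewrite sorted_map; apply: sub_sorted (iota_ltn_sorted a h) => j k /= lt_jk.
  by apply: (col_lt_sep (t := j)); apply/allP => x /nseqP[-> _].
Qed.

Lemma inert_block i w a h :
  i.+1 < a \/ a + h <= i -> inert i (reading_word (block w a h)).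
Proof.
move=> i_out; rewrite /inert all_reading_word.
apply: sub_all_all (block_entries w a h) => x /andP[le_ax lt_x].
apply/andP; split; apply/eqP => eq_x; case: i_out; lia.
Qed.

(** * Padding a core tableau *)

Fixpoint Fiter (ids : seq nat) (T : tableau) : option tableau :=
  if ids is i :: ids' then obind (Fiter ids') (F i T) else Some T.

Section Padding.

Variables s b : nat.

Definition pad (W : tableau) : tableau :=
  block 3 1 s ++ shift_tab s W ++ block 1 (s + 6) b.

Lemma F_pad i W : 0 < i < 5 -> F (s + i) (pad W) = omap pad (F i W).
Proof.
move=> i_range; rewrite F_cat_inert ?inert_block ?F_shift; try lia.
by case: (F i W).
Qed.

Lemma pad_inj : injective pad.
Proof.
move=> W W' eq_pad; have /eqP := eq_pad; rewrite /pad eqseq_cat // => /andP[_].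
have /(congr1 size) := eq_pad; rewrite /pad !size_cat !size_map => /addnI /addIn sz_W.
rewrite eqseq_cat ?size_map // => /andP[/eqP eq_shift _].
exact: inj_map (inj_map (@addnI s)) _ _ eq_shift.
Qed.

Lemma le_B_pad n ids W W' : s + 4 <= n -> all (fun i => 0 < i < 5) ids ->
  Fiter ids W = Some W' -> le_B n (pad W) (pad W').
Proof.
move=> le_n; elim: ids W => [|i ids IH] W /=; first by move=> _ [<-]; apply: rt_refl.
case/andP=> i_range ids_range; case FWV: (F i W) => [V|] //= /(IH _ ids_range).
apply: rt_trans; apply: rt_step; exists (s + i); split; first lia.
by rewrite F_pad // FWV.
Qed.

Lemma pad_ssyt n nu W : s + b + 4 <= n -> is_ssyt 4 nu W ->
  is_ssyt n (nseq s 3 ++ nu ++ nseq b 1) (pad W).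
Proof.
move=> le_n ssyt_W; have := ssyt_W; rewrite is_ssytE => /and4P[_ _ W_ents _].
have shift_ents : all (all (fun x => s < x <= s + 5)) (shift_tab s W).
  rewrite /shift_tab all_map; apply: sub_all W_ents => r; rewrite /= all_map.
  by apply: sub_all => x /andP[x_gt0 le_x] /=; lia.
have bot_ents := block_entries 1 (s + 6) b.
apply: (is_ssyt_cat (t := s)).
- by apply: is_ssyt_block; lia.
- apply: (is_ssyt_cat (t := s + 5)).
  + by apply: is_ssyt_widen (is_ssyt_shift s ssyt_W); lia.
  + by apply: is_ssyt_block; lia.
  + by apply: sub_all_all shift_ents => x /andP[].
  + by apply: sub_all_all bot_ents => x /andP[le_x _]; lia.
- by apply: sub_all_all (block_entries 3 1 s) => x /andP[_]; rewrite add1n ltnS.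
- rewrite all_cat; apply/andP; split.
  + by apply: sub_all_all shift_ents => x /andP[].
  + by apply: sub_all_all bot_ents => x /andP[le_x _]; lia.
Qed.

End Padding.

(** * The two configurations *)

Definition T_A : tableau := [:: [:: 1; 1; 3]; [:: 2; 5]; [:: 4]; [:: 5]].
Definition U_A : tableau := [:: [:: 1; 1; 4]; [:: 2; 5]; [:: 4]; [:: 5]].
Definition V1_A : tableau := [:: [:: 1; 1; 4]; [:: 3; 5]; [:: 4]; [:: 5]].
Definition V2_A : tableau := [:: [:: 1; 3; 4]; [:: 2; 5]; [:: 4]; [:: 5]].
Definition X_A : tableau := [:: [:: 1; 2; 4]; [:: 2; 5]; [:: 4]; [:: 5]].
Definition Y_A : tableau := [:: [:: 1; 1; 3]; [:: 3; 5]; [:: 4]; [:: 5]].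

Lemma not_lattice_A n s b : s + b + 4 <= n ->
  ~ is_lattice (B n (nseq s 3 ++ [:: 3; 2; 1; 1] ++ nseq b 1)) (le_B n).
Proof.
move=> le_n; have le_n' : s + 4 <= n by lia.
apply: (@not_lattice_no_bound_between n _ (pad s b T_A) (pad s b U_A)
                                        (pad s b V1_A) (pad s b V2_A)).
1-4: by apply: pad_ssyt.
- by apply: (@le_B_pad s b n [:: 2; 3]).
- by apply: (@le_B_pad s b n [:: 2]).
- by apply: (@le_B_pad s b n [:: 1; 2; 3]).
- by apply: (@le_B_pad s b n [:: 1; 2]).
apply: (no_bound_between_A (X := pad s b X_A) (Y := pad s b Y_A)
          (a1 := s + 1) (a2 := s + 2) (a3 := s + 3)); rewrite ?F_pad //.
move=> eq_F; have /eqP := inj_omap (@pad_inj s b) (eq_F : _ = omap _ (Some V2_A)).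
by vm_compute.
Qed.

Definition T_B : tableau := [:: [:: 1; 1; 2]; [:: 2; 3; 4]; [:: 3; 5]; [:: 5]].
Definition U_B : tableau := [:: [:: 1; 1; 3]; [:: 2; 3; 4]; [:: 3; 5]; [:: 5]].
Definition V1_B : tableau := [:: [:: 1; 1; 3]; [:: 2; 4; 4]; [:: 3; 5]; [:: 5]].
Definition V2_B : tableau := [:: [:: 1; 2; 3]; [:: 2; 3; 4]; [:: 3; 5]; [:: 5]].
Definition Y_B : tableau := [:: [:: 1; 1; 2]; [:: 2; 4; 4]; [:: 3; 5]; [:: 5]].

Lemma not_lattice_B n s b : s + b + 4 <= n ->
  ~ is_lattice (B n (nseq s 3 ++ [:: 3; 3; 2; 1] ++ nseq b 1)) (le_B n).
Proof.
move=> le_n; have le_n' : s + 4 <= n by lia.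
apply: (@not_lattice_no_bound_between n _ (pad s b T_B) (pad s b U_B)
                                        (pad s b V1_B) (pad s b V2_B)).
1-4: by apply: pad_ssyt.
- by apply: (@le_B_pad s b n [:: 3; 2]).
- by apply: (@le_B_pad s b n [:: 3]).
- by apply: (@le_B_pad s b n [:: 1; 2]).
- by apply: (@le_B_pad s b n [:: 1]).
apply: (no_bound_between_B (Y := pad s b Y_B) (a1 := s + 1) (a2 := s + 2) (a3 := s + 3));
  rewrite ?F_pad //.
by rewrite eqn_add2l.
Qed.

Unset Implicit Arguments.

Theorem lemma5p7 (lam : seq nat) (n m : nat) :
  is_partition lam -> 4 <= size lam -> size lam <= n ->
  1 <= m <= size lam - 2 ->
  lam = nseq m 3 ++ 2 :: nseq (size lam - m - 1) 1 ->
  ~ is_lattice (B n lam) (le_B n).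
Proof.
move=> _; move: (size lam) => L ge4_L le_Ln /andP[ge1_m le_m] ->.
have [lt2_tail|ge2_tail] := ltnP (L - m - 1) 2.
- have [s def_m] : exists s, m = s + 2 by exists (m - 2); lia.
  have -> : L - m - 1 = 1 by lia.
  rewrite def_m nseqD -catA.
  by apply: (not_lattice_B (b := 0)); lia.
- have [s def_m] : exists s, m = s + 1 by exists (m - 1); lia.
  have [b def_tail] : exists b, L - m - 1 = 2 + b by exists (L - m - 3); lia.
  rewrite def_tail def_m nseqD -catA.
  by apply: (not_lattice_A (b := b)); lia.
Qed.
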